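(* Let $n\ge1$ and for each $i\in[n]$ let $X_i$ have the $\mathrm{Beta}(i,n-i+1)$ distribution, with arbitrary joint distribution. Then for $0<s\le n/2$ the value $t(n,s)$ defined by $s=\sum_{i=1}^n\int_0^{t(n,s)}x\,dF_i(x)$ ($F_i$ the distribution function of $X_i$) equals $(2s/n)^{1/2}$, and $$ \mathbb{E}\Big[\max\Big\{|A|: A\subset[n],\ \sum_{i\in A}X_i\le 1\Big\}\Big]\le \sqrt{2n}. $$ *)

From HB Require Import structures.
From mathcomp Require Import all_boot all_order all_algebra.
From mathcomp Require Import all_classical all_reals all_analysis.
Set Implicit Arguments. Unset Strict Implicit. Unset Printing Implicit Defensive.
Import Order.TTheory GRing.Theory Num.Theory.
Local Open Scope ring_scope.

Definition maxcount {R : realType} (n : nat) (x : 'I_n -> R) : nat :=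
  \max_(A : {set 'I_n} | \sum_(i in A) x i <= 1) #|A|.

From HB Require Import structures.
From mathcomp Require Import all_boot all_order all_algebra.
From mathcomp Require Import all_classical all_reals all_analysis.
From mathcomp Require Import ring lra.
From mathcomp Require Import measurable_realfun.
Import Order.TTheory GRing.Theory Num.Theory.
Import numFieldTopology.Exports.
Local Open Scope classical_set_scope.
Local Open Scope ring_scope.

(* The Beta(i, n-i+1) densities, i = 1..n, are n times the Bernstein
   polynomials of degree n-1, so they sum to n on [0, 1]. Hence, whatever the
   joint law, sum_i E[g(X_i); X_i <= t] = n * int_0^t g for bounded nonnegative
   g; with g(x) = x this is n t^2 / 2, which determines t(n, s). Every
   admissible A satisfies |A| <= 1/t + sum_(i in A) (1 - X_i/t)
   <= 1/t + sum_i (1 - X_i/t)^+, and g(x) = 1 - x/t turns this into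
   E[max |A|] <= 1/t + n t / 2, which is sqrt(2n) at t = sqrt(2/n)
   (for n = 1, trivially max |A| <= 1). *)

Section sqrt_arith.
Context {R : rcfType}.

Lemma eq_half_sqr_sqrt (n s t : R) : 0 < n -> 0 <= s -> 0 <= t ->
  s = n * t ^+ 2 / 2 <-> t = Num.sqrt (2 * s / n).
Proof.
move=> n0 s0 t0; split=> [->|->].
  have -> : 2 * (n * t ^+ 2 / 2) / n = t ^+ 2 by field; rewrite gt_eqF.
  by rewrite sqrtr_sqr ger0_norm.
rewrite sqr_sqrtr; last exact: divr_ge0 (mulr_ge0 _ s0) (ltW n0).
by field; rewrite gt_eqF.
Qed.

Lemma inv_add_half_at_sqrt (n : R) : 0 < n ->
  (Num.sqrt (2 / n))^-1 + n * Num.sqrt (2 / n) / 2 = Num.sqrt (2 * n).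
Proof.
move=> n0; set t := Num.sqrt (2 / n).
have t0 : 0 < t by rewrite sqrtr_gt0 divr_gt0.
have t2 : t ^+ 2 = 2 / n by rewrite sqr_sqrtr // ltW // divr_gt0.
have -> : Num.sqrt (2 * n) = n * t.
  rewrite -[RHS]ger0_norm ?mulr_ge0 ?ltW // -sqrtr_sqr exprMn t2.
  by congr Num.sqrt; field; rewrite gt_eqF.
have -> : t^-1 = n * t / 2.
  apply: (@mulfI _ t); first by rewrite gt_eqF.
  rewrite mulfV ?gt_eqF // mulrA mulrCA -expr2 t2.
  by field; rewrite gt_eqF.
by field.
Qed.

End sqrt_arith.

Lemma integral_affine {R : realType} (a b t : R) : 0 <= t ->
  (\int[lebesgue_measure]_(x in `[0%R, t]) (a + b * x)%:E = (a * t + b * t ^+ 2 / 2)%:E)%E.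
Proof.
rewrite le_eqVlt => /predU1P[<-|t0].
  rewrite (@integral_Sset1 _ _ _ 0); first by rewrite expr2 !(mulr0, mul0r) addr0.
  by move=> x; rewrite /= in_itv /= => /andP[x0 x0']; apply/eqP; rewrite eq_le x0 x0'.
pose p : {poly R} := a *: 'X + (b / 2) *: 'X^2.
have p' x : (p^`()).[x] = a + b * x.
  by rewrite /p derivD !derivZ derivX derivXn !hornerE /=; field.
transitivity (\int[lebesgue_measure]_(x in `[0%R, t]) ((p^`()).[x])%:E)%E.
  by apply: eq_integral => x _; rewrite p'.
rewrite (@continuous_FTC2 _ _ (horner p)) //.
- by rewrite /p !hornerE /= -EFinB; congr EFin; field.
- by apply/continuous_subspaceT => x; exact: continuous_horner.
- split.
  + by move=> x _; exact: derivable_horner.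
  + by apply: cvg_at_right_filter; exact: continuous_horner.
  + by apply: cvg_at_left_filter; exact: continuous_horner.
- by move=> x _; rewrite -derivE.
Qed.

Section beta_family.
Context {R : realType}.
Local Notation mu := (@lebesgue_measure R).

Lemma beta_pdf_bernstein m i (x : R) : (i <= m)%N -> 0 <= x <= 1 ->
  beta_pdf i.+1 (m.+1 - i) x = m.+1%:R * ((1 - x) ^+ (m - i) * x ^+ i *+ 'C(m, i)).
Proof.
move=> im x01.
rewrite /beta_pdf patchE ifT; last by rewrite inE /= in_itv.
rewrite subSn // /XMonemX /= beta_fun_fact subnKC //.
have f0 k : (k`!%:R : R) != 0 by rewrite pnatr_eq0 -lt0n fact_gt0.
have c0 : ('C(m, i)%:R : R) != 0 by rewrite pnatr_eq0 -lt0n bin_gt0.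
have m0 : (1 + m%:R : R) != 0 by rewrite addrC natr1 pnatr_eq0.
rewrite factS -mulr_natr -(bin_fact im) !natrM.
by field; rewrite !f0 c0 m0.
Qed.

Lemma sum_beta_pdf m (x : R) : 0 <= x <= 1 ->
  \sum_(i < m.+1) beta_pdf i.+1 (m.+1 - i) x = m.+1%:R.
Proof.
move=> x01.
under eq_bigr => i _ do rewrite (beta_pdf_bernstein _ _ _ (ltnSE (ltn_ord i)) x01).
by rewrite -mulr_sumr -exprDn subrK expr1n mulr1.
Qed.

Lemma beta_prob_lt0 a b : beta_prob (R:=R) a b `]-oo, 0[ = 0%E.
Proof.
rewrite -integral_beta_pdf // (eq_integral (fun _ => 0%E)) ?integral0 // => x.
rewrite inE /= in_itv /= => x0.
rewrite /beta_pdf patchE ifF ?mul0r //.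
by apply/negbTE/negP => /set_mem; rewrite /= in_itv /= leNgt x0.
Qed.

Lemma integral_beta_prob_bounded a b (t M : R) (h : R -> R) :
  measurable_fun `[0%R, t] h -> (forall x, 0 <= x <= t -> 0 <= h x <= M) ->
  (\int[beta_prob a b]_(x in `[0%R, t]) (h x)%:E =
   \int[mu]_(x in `[0%R, t]) ((h x)%:E * (beta_pdf a b x)%:E))%E.
Proof.
move=> mh hM; apply: integral_beta_prob => //; first exact/measurable_EFinP.
apply: (@le_lt_trans _ _ (`|M|%:E * beta_prob a b `[0%R, t])%E).
  apply: integral_le_bound => //; first exact/measurable_EFinP.
  apply: aeW => x; rewrite /= in_itv /= => /hM /andP[h0 hM'].
  by rewrite lee_fin ger0_norm // (le_trans hM' (ler_norm _)).
by rewrite -(fineK (beta_prob_fin_num _ _ _)) // -EFinM ltry.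
Qed.

Lemma eq_integral_beta_prob (nu : {measure set R -> \bar R}) a b D (f : R -> \bar R) :
  (forall A, measurable A -> nu A = beta_prob a b A) ->
  measurable D -> measurable_fun D f -> (forall x, D x -> 0 <= f x)%E ->
  (\int[nu]_(x in D) f x = \int[beta_prob a b]_(x in D) f x)%E.
Proof.
move=> nu_beta mD mf f0.
(* [beta_prob] is a measure on [measurableTypeR R], not on [R] itself, so the
   two are compared through the pushforward by the identity. *)
pose idR : measurableTypeR R -> R := idfun.
have mid : measurable_fun setT idR := @measurable_id _ _ setT.
rewrite (eq_measure_integral (pushforward (beta_prob a b) idR)); last first.
  by move=> A mA _; rewrite nu_beta.
by rewrite ge0_integral_pushforward // => x /set_mem /f0.
Qed.

Variables (m : nat) (nu : 'I_m.+1 -> {measure set R -> \bar R}).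
Hypothesis nu_beta : forall i A, measurable A -> nu i A = beta_prob i.+1 (m.+1 - i) A.

Lemma sum_integral_beta (t M : R) (h : R -> R) : 0 <= t <= 1 ->
  measurable_fun `[0%R, t] h -> (forall x, 0 <= x <= t -> 0 <= h x <= M) ->
  (\sum_(i < m.+1) \int[nu i]_(x in `[0%R, t]) (h x)%:E =
   \int[mu]_(x in `[0%R, t]) (m.+1%:R * h x)%:E)%E.
Proof.
move=> /andP[t0 t1] mh hM.
have h0 x : x \in `[0%R, t] -> 0 <= h x.
  by rewrite in_itv /= => /hM /andP[].
have law i : (\int[nu i]_(x in `[0%R, t]) (h x)%:E =
    \int[beta_prob i.+1 (m.+1 - i)]_(x in `[0%R, t]) (h x)%:E)%E.
  apply: eq_integral_beta_prob => //; first exact: nu_beta.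
  exact/measurable_EFinP.
under eq_bigr => i _ do rewrite law (integral_beta_prob_bounded _ _ _ _ _ mh hM).
rewrite -(@ge0_integral_sum _ _ _ mu _ (measurable_itv _) _
  (fun (i : 'I_m.+1) x => (h x)%:E * (beta_pdf i.+1 (m.+1 - i) x)%:E)%E); last 2 first.
- move=> i; apply: emeasurable_funM; first exact/measurable_EFinP.
  by apply/measurable_EFinP/measurable_funTS; exact: measurable_beta_pdf.
- move=> i x /= /h0 hx0; rewrite -EFinM lee_fin mulr_ge0 //.
  exact: beta_pdf_ge0.
apply: eq_integral => x; rewrite inE /= in_itv /= => /andP[x0 xt].
rewrite (_ : (\sum_(i < m.+1) (h x)%:E * (beta_pdf i.+1 (m.+1 - i) x)%:E)%E =
  (\sum_(i < m.+1) h x * beta_pdf i.+1 (m.+1 - i) x)%:E); last first.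
  by rewrite -sumEFin; apply: eq_bigr.
by rewrite -mulr_sumr sum_beta_pdf 1?mulrC // x0 (le_trans xt t1).
Qed.

Lemma sum_first_moment_betaE (t : R) : 0 <= t <= 1 ->
  (\sum_(i < m.+1) \int[nu i]_(x in `[0%R, t]) x%:E = (m.+1%:R * t ^+ 2 / 2)%:E)%E.
Proof.
move=> /[dup] t01 /andP[t0 t1].
rewrite (@sum_integral_beta t 1 id) //; last first.
  by move=> x /andP[x0 xt]; rewrite x0 (le_trans xt t1).
transitivity (\int[mu]_(x in `[0%R, t]) (0 + m.+1%:R * x)%:E)%E.
  by apply: eq_integral => x _; rewrite add0r.
by rewrite integral_affine // mul0r add0r mulrA.
Qed.

Lemma sum_first_moment_beta_sqrt (s t : R) : 0 < s -> 0 <= t <= 1 ->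
  s%:E = (\sum_(i < m.+1) \int[nu i]_(x in `[0%R, t]) x%:E)%E <->
  t = Num.sqrt (2 * s / m.+1%:R).
Proof.
move=> s0 /[dup] t01 /andP[t0 _].
rewrite sum_first_moment_betaE // -(eq_half_sqr_sqrt _ _ _ _ (ltW s0) t0) ?ltr0n //.
by split=> [[]|->].
Qed.

Lemma sum_integral_hinge_betaE (t : R) : 0 < t <= 1 ->
  (\sum_(i < m.+1) \int[nu i]_(x in `[0%R, t]) (1 - x / t)%:E =
   (m.+1%:R * t / 2)%:E)%E.
Proof.
move=> /andP[t0 t1].
have t01 : 0 <= t <= 1 by rewrite t1 ltW.
rewrite (@sum_integral_beta t 1 (fun x => 1 - x / t)) //; first last.
- move=> x /andP[x0 xt]; rewrite subr_ge0 ler_pdivrMr // mul1r xt /=.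
  by rewrite gerBl divr_ge0 // ltW.
- by apply: measurable_funB => //; exact: measurable_funM.
transitivity (\int[mu]_(x in `[0%R, t])
  (m.+1%:R + - (m.+1%:R / t) * x)%:E)%E.
  by apply: eq_integral => x _; congr EFin; field; rewrite gt_eqF.
by rewrite integral_affine ?ltW //; congr EFin; field; rewrite gt_eqF.
Qed.

End beta_family.

Section hinge.
Context {R : realType}.

Definition hinge (t y : R) := Num.max (1 - y / t) 0.

Lemma hinge_ge0 t y : 0 <= hinge t y.
Proof. by rewrite le_max lexx orbT. Qed.

Lemma measurable_hinge t : measurable_fun setT (hinge t).
Proof.
apply: (@measurable_maxr _ _ _ _ (fun y : R => 1 - y / t) (cst 0)) => //.
by apply: measurable_funB => //; exact: measurable_funM.
Qed.

Lemma maxcount_le_hinge n (x : 'I_n -> R) (t : R) : 0 < t ->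
  (maxcount x)%:R <= t^-1 + \sum_(i < n) hinge t (x i).
Proof.
move=> t0; apply: (big_ind (fun k : nat => k%:R <= _)).
- by rewrite addr_ge0 ?sumr_ge0 ?invr_ge0 ?ltW // => i _; exact: hinge_ge0.
- by move=> a b ha hb; rewrite /maxn; case: ifP.
move=> A sumA_le1.
have -> : #|A|%:R = \sum_(i in A) (1 - x i / t) + t^-1 * \sum_(i in A) x i.
  rewrite mulr_sumr -big_split /= -sumr_const.
  by apply: eq_bigr => i _; field; rewrite gt_eqF.
rewrite addrC lerD //.
  by rewrite -[leRHS]mulr1 ler_wpM2l // invr_ge0 ltW.
rewrite [leRHS](bigID (mem A)) /= -[leLHS]addr0 lerD ?sumr_ge0 //.
- by apply: ler_sum => i _; rewrite le_max lexx.
- by move=> i _; exact: hinge_ge0.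
Qed.

Lemma maxcount_le_card n (x : 'I_n -> R) : (maxcount x <= n)%N.
Proof.
apply: (big_ind (fun k => k <= n)%N) => // [a b ha hb|A _].
  by rewrite geq_max ha hb.
by rewrite -[leqRHS]card_ord max_card.
Qed.

Lemma integral_hinge_le (nu : {measure set R -> \bar R}) (t : R) :
  nu `]-oo, 0[%classic = 0%E -> 0 < t ->
  (\int[nu]_y (hinge t y)%:E <= \int[nu]_(y in `[0%R, t]) (1 - y / t)%:E)%E.
Proof.
move=> nu_neg t0; rewrite [leRHS]integral_mkcond.
apply: ae_ge0_le_integral => //.
- by move=> y _; rewrite lee_fin hinge_ge0.
- by apply/measurable_EFinP; exact: measurable_hinge.
- move=> y _; rewrite patchE; case: ifPn => // /set_mem /=.
  by rewrite in_itv /= => /andP[_ yt]; rewrite lee_fin subr_ge0 ler_pdivrMr // mul1r.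
- apply/(measurable_restrictT _ _).1 => //; apply/measurable_EFinP.
  by apply: measurable_funB => //; exact: measurable_funM.
exists `]-oo, 0[%classic; split => // y /= hy; rewrite in_itv /=.
apply: contra_notT hy; rewrite -leNgt => y0 _.
rewrite patchE; case: ifPn => [/set_mem|yt].
  rewrite /= in_itv /= => /andP[_ yt].
  by rewrite lee_fin ge_max lexx subr_ge0 ler_pdivrMr // mul1r yt.
have ty : t < y.
  by rewrite ltNge; apply: contra yt => yt; apply/mem_set; rewrite /= in_itv /= y0.
by rewrite lee_fin ge_max lexx andbT subr_le0 ler_pdivlMr // mul1r (ltW ty).
Qed.

End hinge.

(* Unlike [ge0_le_integral], no measurability is needed: the integral of a
   nonnegative function is the supremum of the integrals of the simple
   functions below it. *)
Lemma le_ge0_integral d (T : measurableType d) (R : realType)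
  (mu : {measure set T -> \bar R}) (f g : T -> \bar R) :
  (forall x, 0 <= f x)%E -> (forall x, f x <= g x)%E ->
  (\int[mu]_x f x <= \int[mu]_x g x)%E.
Proof.
move=> f0 fg; have g0 x : (0 <= g x)%E by apply: le_trans (f0 x) (fg x).
rewrite !ge0_integralTE //; apply: ereal_sup_le => _ [h hf <-].
by exists h => // x; exact: le_trans (hf x) (fg x).
Qed.

Section expectation.
Context {R : realType} d (T : measurableType d) (P : probability T R).
Variables (m : nat) (X : 'I_m.+1 -> {RV P >-> R}).
Hypothesis X_beta : forall i A, measurable A ->
  distribution P (X i) A = beta_prob i.+1 (m.+1 - i) A.

Lemma expectation_hinge_le i (t : R) : 0 < t ->
  (\int[P]_w (hinge t (X i w))%:E <=
   \int[distribution P (X i)]_(y in `[0%R, t]) (1 - y / t)%:E)%E.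
Proof.
move=> t0; rewrite -(@ge0_integral_distribution _ _ _ _ _ _ (X i) (fun y => (hinge t y)%:E)).
- apply: integral_hinge_le => //.
  exact: eq_trans (X_beta _ _ (measurable_itv _)) (beta_prob_lt0 _ _).
- by apply/measurable_EFinP; exact: measurable_hinge.
- by move=> y; rewrite lee_fin hinge_ge0.
Qed.

Lemma expectation_maxcount_le (t : R) : 0 < t <= 1 ->
  (\int[P]_w ((maxcount (fun i => X i w))%:R)%:E <= (t^-1 + m.+1%:R * t / 2)%:E)%E.
Proof.
move=> /[dup] t01 /andP[t0 _].
have mhX i : measurable_fun setT (fun w => hinge t (X i w)).
  by apply: measurableT_comp => //; exact: measurable_hinge.
apply: (@le_trans _ _ (\int[P]_w (t^-1 + \sum_(i < m.+1) hinge t (X i w))%:E)%E).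
  by apply: le_ge0_integral => w; rewrite lee_fin ?ler0n ?maxcount_le_hinge.
under eq_integral => w _ do rewrite EFinD -sumEFin.
rewrite ge0_integralD //; first last.
- by apply: emeasurable_sum => i; apply/measurable_EFinP; exact: mhX.
- by move=> w _; rewrite sume_ge0 // => i _; rewrite lee_fin hinge_ge0.
- by move=> w _; rewrite lee_fin invr_ge0 ltW.
rewrite integral_cst //= probability_setT mule1 EFinD leeD2l //.
rewrite ge0_integral_sum //; first last.
- by move=> i w _; rewrite lee_fin hinge_ge0.
- by move=> i; apply/measurable_EFinP; exact: mhX.
rewrite -(@sum_integral_hinge_betaE _ _ _ X_beta _ t01).
by apply: lee_sum => i _; exact: expectation_hinge_le.
Qed.

End expectation.

Theorem mainTheorem7 (R : realType) (d : measure_display) (T : measurableType d)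
  (P : probability T R) (n : nat) (X : 'I_n -> {RV P >-> R}) :
  (0 < n)%N ->
  (forall (i : 'I_n) (A : set R), measurable A ->
     distribution P (X i) A = beta_prob i.+1 (n - i) A) ->
  (forall s : R, 0 < s -> s <= n%:R / 2 ->
     forall t : R, 0 <= t <= 1 ->
       (s%:E = (\sum_(i < n) \int[distribution P (X i)]_(x in `[0%R, t]) x%:E)%E
        <-> t = Num.sqrt (2 * s / n%:R)))
  /\
  (\int[P]_w ((maxcount (fun i => X i w))%:R : R)%:E <= (Num.sqrt (2 * n%:R))%:E)%E.
Proof.
case: n X => [//|m] X _ X_beta; split=> [s s0 _ t t01|].
  exact: sum_first_moment_beta_sqrt.
case: m X X_beta => [|m] X X_beta.
  apply: (@le_trans _ _ (\int[P]_w 1)%E).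
    apply: le_ge0_integral => w; rewrite lee_fin ?ler0n // (ler_nat _ _ 1).
    exact: maxcount_le_card.
  rewrite integral_cst //= probability_setT mule1 lee_fin -[leLHS]sqrtr1.
  by rewrite ler_sqrt // mulr1n; lra.
have n0 : (0 : R) < m.+2%:R by rewrite ltr0n.
rewrite -inv_add_half_at_sqrt //; apply: (@expectation_maxcount_le _ _ _ P _ X X_beta).
rewrite sqrtr_gt0 divr_gt0 //= -[leRHS]sqrtr1 ler_sqrt // ler_pdivrMr // mul1r.
by rewrite (ler_nat _ 2 m.+2).
Qed.
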